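(* Let $I\subseteq\mathbb{R}_+$ be an open interval, let $p\in\mathbb{R}$ and $q<0$, and let $f:I\to\mathbb{R}_+$ be $(p,q)$-Jensen convex, i.e. \[ f\big(H_p(x,y)\big)\le H_q\big(f(x),f(y)\big)\qquad(x,y\in I). \] Then $f_{p,q}$ is convex on $I_p$, and consequently $f$ is continuous and moreover locally Lipschitz on $I$.
   Context: $\mathbb{R}_+=]0,\infty[$. For $p\in\mathbb{R}$ the power mean is $H_p(x,y)=\left(\frac{x^p+y^p}{2}\right)^{1/p}$ if $p\neq0$ and $H_0(x,y)=\sqrt{xy}$, for $x,y>0$. For $f:I\to\mathbb{R}_+$ and $(p,q)\in\mathbb{R}^2$, set $I_p=\{t^p\mid t\in I\}$ if $p\neq0$ and $I_p=\{\log t\mid t\in I\}$ if $p=0$, and define $f_{p,q}:I_p\to\mathbb{R}$ by $f_{p,q}(x)=\operatorname{sign}(q)\big(f(x^{1/p})\big)^q$ if $p\neq0,q\neq0$; $f_{p,q}(x)=\operatorname{sign}(q)\big(f(\exp x)\big)^q$ if $p=0,q\neq0$; $f_{p,q}(x)=\log f(x^{1/p})$ if $p\neq0,q=0$; $f_{p,q}(x)=\log f(\exp x)$ if $p=q=0$. *)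

From Stdlib Require Import Reals.
From Coquelicot Require Import Rbar.
Open Scope R_scope.

Definition H (p x y : R) : R :=
  if Req_EM_T p 0 then sqrt (x * y)
  else Rpower ((Rpower x p + Rpower y p) / 2) (1 / p).

Definition sgn (q : R) : R :=
  if Rlt_dec 0 q then 1 else if Rlt_dec q 0 then -1 else 0.

Definition is_open_interval (I : R -> Prop) : Prop :=
  exists a b : Rbar, Rbar_lt a b /\
    forall x, I x <-> (Rbar_lt a x /\ Rbar_lt x b).

Definition Ip (p : R) (I : R -> Prop) : R -> Prop :=
  fun u => exists t, I t /\ u = (if Req_EM_T p 0 then ln t else Rpower t p).

Definition fpq (p q : R) (f : R -> R) (x : R) : R :=
  let y := if Req_EM_T p 0 then exp x else Rpower x (1 / p) in
  if Req_EM_T q 0 then ln (f y) else sgn q * Rpower (f y) q.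

Definition convex_on (D : R -> Prop) (g : R -> R) : Prop :=
  forall u v t, D u -> D v -> 0 <= t <= 1 ->
    g (t * u + (1 - t) * v) <= t * g u + (1 - t) * g v.

Definition locally_lipschitz_on (I : R -> Prop) (f : R -> R) : Prop :=
  forall x, I x -> exists delta L, 0 < delta /\
    forall u v, I u -> I v -> Rabs (u - x) < delta -> Rabs (v - x) < delta ->
      Rabs (f u - f v) <= L * Rabs (u - v).

(* In the coordinates u = t^p (or log t), the (p,q)-Jensen inequality says exactly
   that f_{p,q} = -f^q is midpoint convex on the interval I_p, and f_{p,q} < 0 is
   bounded above there; a midpoint convex function bounded above is convex, since
   midpoint convexity would double a positive excess over a chord again and again.  A convex function on an open interval is locally Lipschitz by
   the monotonicity of its chord slopes, and f = (-f_{p,q} o pmap)^(1/q) is a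
   composition of locally Lipschitz maps, hence locally Lipschitz and continuous. *)
From Stdlib Require Import Reals Lra.
From Coquelicot Require Import Rbar.
Open Scope R_scope.

Lemma exp_le a b : a <= b -> exp a <= exp b.
Proof. intros [h|<-]; [left; apply exp_increasing; auto | lra]. Qed.

Lemma ln_le a b : 0 < a -> a <= b -> ln a <= ln b.
Proof. intros ha [h|<-]; [left; apply ln_increasing; auto | lra]. Qed.

Lemma Rpower_le_antimono (a b c : R) : c <= 0 -> 0 < a <= b -> Rpower b c <= Rpower a c.
Proof. intros hc [ha hab]; apply exp_le; pose proof (ln_le a b ha hab); nra. Qed.

Lemma Rpower_le_endpoints (a b x e : R) :
  0 < a -> a <= x <= b -> Rpower x e <= Rpower a e + Rpower b e.
Proof.
  intros ha hx.
  assert (0 < Rpower a e) by apply exp_pos.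
  assert (0 < Rpower b e) by apply exp_pos.
  destruct (Rle_dec 0 e).
  - pose proof (Rle_Rpower_l x b e r ltac:(lra)); lra.
  - pose proof (Rpower_le_antimono a x e ltac:(lra) ltac:(lra)); lra.
Qed.

Definition between (u v z : R) : Prop := Rmin u v <= z <= Rmax u v.

Definition monotone_on (P : R -> Prop) (h : R -> R) : Prop :=
  (forall a b, P a -> P b -> a <= b -> h a <= h b) \/
  (forall a b, P a -> P b -> a <= b -> h b <= h a).

Lemma between_convex_comb u v t : 0 <= t <= 1 -> between u v (t * u + (1 - t) * v).
Proof.
  intros ht; unfold between; destruct (Rle_dec u v).
  - rewrite Rmin_left, Rmax_right by auto; nra.
  - rewrite Rmin_right, Rmax_left by lra; nra.
Qed.

Lemma between_monotone (P : R -> Prop) (h : R -> R) u v z :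
  monotone_on P h -> P u -> P v -> P z -> between u v z -> between (h u) (h v) (h z).
Proof.
  intros hm hu hv hz; unfold between.
  pose proof (Rmin_l (h u) (h v)); pose proof (Rmin_r (h u) (h v)).
  pose proof (Rmax_l (h u) (h v)); pose proof (Rmax_r (h u) (h v)).
  destruct (Rle_dec u v).
  - rewrite Rmin_left, Rmax_right by auto; intros hb.
    destruct hm as [hm|hm];
      pose proof (hm u z hu hz ltac:(lra)); pose proof (hm z v hz hv ltac:(lra)); lra.
  - rewrite Rmin_right, Rmax_left by lra; intros hb.
    destruct hm as [hm|hm];
      pose proof (hm v z hv hz ltac:(lra)); pose proof (hm z u hz hu ltac:(lra)); lra.
Qed.

Lemma open_interval_between (I : R -> Prop) x y z :
  is_open_interval I -> I x -> I y -> between x y z -> I z.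
Proof.
  intros [a [b [hab hI]]] hx hy hz; apply hI in hx; apply hI in hy; apply hI.
  unfold between in hz.
  destruct (Rle_dec x y).
  - rewrite Rmin_left, Rmax_right in hz by auto.
    destruct a, b; simpl in *; intuition lra.
  - rewrite Rmin_right, Rmax_left in hz by lra.
    destruct a, b; simpl in *; intuition lra.
Qed.

Lemma open_interval_neighbours (I : R -> Prop) x :
  is_open_interval I -> I x -> exists a b, I a /\ I b /\ a < x < b.
Proof.
  intros [a [b [hab hI]]] hx; pose proof hx as hx'; apply hI in hx.
  assert (below : exists a', I a' /\ a' < x).
  { destruct a as [a| |]; simpl in hx; try tauto.
    - exists ((a + x) / 2); split; [apply hI; destruct b; simpl in *; intuition lra | lra].
    - exists (x - 1); split; [apply hI; destruct b; simpl in *; intuition lra | lra]. }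
  assert (above : exists b', I b' /\ x < b').
  { destruct b as [b| |]; simpl in hx; try tauto.
    - exists ((b + x) / 2); split; [apply hI; destruct a; simpl in *; intuition lra | lra].
    - exists (x + 1); split; [apply hI; destruct a; simpl in *; intuition lra | lra]. }
  destruct below as [a' [? ?]], above as [b' [? ?]]; exists a', b'; auto.
Qed.

Lemma open_interval_ball (I : R -> Prop) x :
  is_open_interval I -> I x -> exists e, 0 < e /\ forall y, Rabs (y - x) < e -> I y.
Proof.
  intros hI hx.
  destruct (open_interval_neighbours I x hI hx) as [a [b [ha [hb hab]]]].
  exists (Rmin (x - a) (b - x)); split; [apply Rmin_glb_lt; lra|].
  intros y hy; apply Rabs_def2 in hy.
  pose proof (Rmin_l (x - a) (b - x)); pose proof (Rmin_r (x - a) (b - x)).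
  apply (open_interval_between I a b y hI ha hb).
  unfold between; rewrite Rmin_left, Rmax_right by lra; lra.
Qed.

Definition convex_set (D : R -> Prop) : Prop :=
  forall u v t, D u -> D v -> 0 <= t <= 1 -> D (t * u + (1 - t) * v).

Lemma midpoint_convex_bounded_nonpos (e : R -> R) (K : R) :
  e 0 = 0 -> e 1 = 0 ->
  (forall a b, 0 <= a <= 1 -> 0 <= b <= 1 -> e ((a + b) / 2) <= (e a + e b) / 2) ->
  (forall s, 0 <= s <= 1 -> e s <= K) ->
  forall t, 0 <= t <= 1 -> e t <= 0.
Proof.
  intros e0 e1 hmid hK t ht.
  assert (doubling : forall s, 0 <= s <= 1 -> exists s', 0 <= s' <= 1 /\ 2 * e s <= e s').
  { intros s hs; destruct (Rle_dec s (1 / 2)).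
    - exists (2 * s); split; [lra|].
      pose proof (hmid 0 (2 * s) ltac:(lra) ltac:(lra)) as hh.
      replace ((0 + 2 * s) / 2) with s in hh by field; lra.
    - exists (2 * s - 1); split; [lra|].
      pose proof (hmid 1 (2 * s - 1) ltac:(lra) ltac:(lra)) as hh.
      replace ((1 + (2 * s - 1)) / 2) with s in hh by field; lra. }
  assert (iterate : forall n, exists s', 0 <= s' <= 1 /\ 2 ^ n * e t <= e s').
  { induction n as [|n [s [hs hn]]].
    - exists t; split; [lra | simpl; lra].
    - destruct (doubling s hs) as [s' [hs' h2]].
      exists s'; split; [lra | simpl; lra]. }
  apply Rnot_lt_le; intros et_pos.
  destruct (Pow_x_infinity 2 ltac:(rewrite Rabs_pos_eq; lra) (K / e t + 1)) as [N hN].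
  specialize (hN N (le_n N)); rewrite Rabs_pos_eq in hN by (apply pow_le; lra).
  destruct (iterate N) as [s [hs hN']].
  pose proof (hK s hs).
  assert (K / e t * e t = K) by (field; lra).
  nra.
Qed.

Lemma convex_on_midpoint_bounded (D : R -> Prop) (g : R -> R) (M : R) :
  convex_set D ->
  (forall u v, D u -> D v -> g ((u + v) / 2) <= (g u + g v) / 2) ->
  (forall u, D u -> g u <= M) ->
  convex_on D g.
Proof.
  intros hD hmid hM u v t hu hv ht.
  set (e := fun s => g (s * u + (1 - s) * v) - (s * g u + (1 - s) * g v)).
  enough (e t <= 0) by (unfold e in *; lra).
  apply (midpoint_convex_bounded_nonpos e (M + Rabs (g u) + Rabs (g v))); auto.
  - unfold e; replace (0 * u + (1 - 0) * v) with v by ring; ring.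
  - unfold e; replace (1 * u + (1 - 1) * v) with u by ring; ring.
  - intros a b ha hb; unfold e.
    replace ((a + b) / 2 * u + (1 - (a + b) / 2) * v)
      with ((a * u + (1 - a) * v + (b * u + (1 - b) * v)) / 2) by field.
    pose proof (hmid _ _ (hD u v a hu hv ha) (hD u v b hu hv hb)); lra.
  - intros s hs; unfold e.
    pose proof (hM _ (hD u v s hu hv hs)).
    pose proof (Rle_abs (- g u)); pose proof (Rle_abs (- g v)).
    pose proof (Rabs_pos (g u)); pose proof (Rabs_pos (g v)).
    rewrite !Rabs_Ropp in *.
    assert (s * - g u <= s * Rabs (g u)) by (apply Rmult_le_compat_l; lra).
    assert ((1 - s) * - g v <= (1 - s) * Rabs (g v)) by (apply Rmult_le_compat_l; lra).
    nra.
Qed.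

Definition slope (g : R -> R) (x y : R) : R := (g y - g x) / (y - x).

Lemma convex_on_three_slopes (D : R -> Prop) (g : R -> R) x y z :
  convex_on D g -> D x -> D z -> x < y < z ->
  slope g x y <= slope g x z /\ slope g x z <= slope g y z.
Proof.
  intros hg hx hz hy; unfold slope.
  set (t := (z - y) / (z - x)).
  assert (ht_def : t * (z - x) = z - y) by (unfold t; field; lra).
  assert (ht : 0 <= t <= 1) by (split; nra).
  pose proof (hg x z t hx hz ht) as hconv.
  replace (t * x + (1 - t) * z) with y in hconv by (unfold t; field; lra).
  assert (key : (z - x) * g y <= (z - y) * g x + (y - x) * g z).
  { rewrite <- ht_def; replace (y - x) with ((1 - t) * (z - x)) by lra; nra. }
  set (s1 := (g y - g x) / (y - x)); set (s2 := (g z - g x) / (z - x));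
    set (s3 := (g z - g y) / (z - y)).
  assert (g y = g x + s1 * (y - x)) by (unfold s1; field; lra).
  assert (g z = g x + s2 * (z - x)) by (unfold s2; field; lra).
  assert (g z = g y + s3 * (z - y)) by (unfold s3; field; lra).
  split; nra.
Qed.

Lemma convex_on_slope_le (D : R -> Prop) (g : R -> R) x y x' y' :
  convex_on D g -> D x -> D y' -> x < y -> x' < y' -> x <= x' -> y <= y' ->
  slope g x y <= slope g x' y'.
Proof.
  intros hg hx hy' hxy hxy' hxx' hyy'.
  apply Rle_trans with (slope g x y').
  - destruct (Req_dec y y') as [<-|]; [lra|].
    apply (convex_on_three_slopes D g x y y'); auto; lra.
  - destruct (Req_dec x x') as [<-|]; [lra|].
    apply (convex_on_three_slopes D g x x' y'); auto; lra.
Qed.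

Lemma convex_on_locally_lipschitz (D : R -> Prop) (g : R -> R) :
  (forall x, D x -> exists a b, D a /\ D b /\ a < x < b) ->
  convex_on D g -> locally_lipschitz_on D g.
Proof.
  intros hD hg x hx.
  destruct (hD x hx) as [a [b [ha [hb hab]]]].
  set (a' := (a + x) / 2); set (b' := (x + b) / 2).
  assert (a < a' < x /\ x < b' < b) by (unfold a', b'; lra).
  exists (Rmin (x - a') (b' - x)), (Rabs (slope g a a') + Rabs (slope g b' b)).
  split; [apply Rmin_glb_lt; lra|].
  assert (lipschitz_ordered : forall u v, D u -> D v -> a' <= u -> u < v -> v <= b' ->
    Rabs (g u - g v) <= (Rabs (slope g a a') + Rabs (slope g b' b)) * Rabs (u - v)).
  { intros u v hu hv hau huv hvb.
    pose proof (convex_on_slope_le D g a a' u v hg ha hv ltac:(lra) huv ltac:(lra) ltac:(lra)).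
    pose proof (convex_on_slope_le D g u v b' b hg hu hb huv ltac:(lra) ltac:(lra) ltac:(lra)).
    replace (g u - g v) with (- slope g u v * (v - u)) by (unfold slope; field; lra).
    rewrite Rabs_mult, Rabs_Ropp, (Rabs_minus_sym u v).
    apply Rmult_le_compat_r; [apply Rabs_pos|].
    pose proof (Rle_abs (slope g b' b)); pose proof (Rle_abs (- slope g a a')).
    pose proof (Rabs_pos (slope g a a')); pose proof (Rabs_pos (slope g b' b)).
    rewrite Rabs_Ropp in *; apply Rabs_le; lra. }
  intros u v hu hv hux hvx.
  pose proof (Rmin_l (x - a') (b' - x)); pose proof (Rmin_r (x - a') (b' - x)).
  apply Rabs_def2 in hux; apply Rabs_def2 in hvx.
  destruct (Rtotal_order u v) as [huv|[<-|huv]].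
  - apply lipschitz_ordered; auto; lra.
  - rewrite !Rminus_diag, Rabs_R0; lra.
  - rewrite (Rabs_minus_sym (g u)), (Rabs_minus_sym u).
    apply lipschitz_ordered; auto; lra.
Qed.

Lemma locally_lipschitz_on_comp (D E : R -> Prop) (h k : R -> R) :
  (forall x, D x -> E (h x)) ->
  locally_lipschitz_on D h -> locally_lipschitz_on E k ->
  locally_lipschitz_on D (fun x => k (h x)).
Proof.
  intros hDE hh hk x hx.
  destruct (hh x hx) as [d1 [L1 [hd1 lip1]]].
  destruct (hk (h x) (hDE x hx)) as [d2 [L2 [hd2 lip2]]].
  assert (hx0 : Rabs (x - x) = 0) by (rewrite Rminus_diag; apply Rabs_R0).
  set (d := Rmin d1 (d2 / (Rabs L1 + 1))).
  assert (hdd : d <= d1 /\ d <= d2 / (Rabs L1 + 1)) by (split; [apply Rmin_l | apply Rmin_r]).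
  assert (hd : 0 < d).
  { apply Rmin_glb_lt; auto; apply Rdiv_lt_0_compat; [|pose proof (Rabs_pos L1)]; lra. }
  assert (lip1' : forall u v, D u -> D v -> Rabs (u - x) < d -> Rabs (v - x) < d ->
    Rabs (h u - h v) <= Rabs L1 * Rabs (u - v)).
  { intros u v hu hv hux hvx.
    apply Rle_trans with (L1 * Rabs (u - v)); [apply lip1; auto; lra|].
    apply Rmult_le_compat_r; [apply Rabs_pos | apply Rle_abs]. }
  assert (near : forall u, D u -> Rabs (u - x) < d -> Rabs (h u - h x) < d2).
  { intros u hu hux.
    pose proof (lip1' u x hu hx hux ltac:(lra)).
    pose proof (Rabs_pos L1).
    assert (d2 / (Rabs L1 + 1) * (Rabs L1 + 1) = d2) by (field; lra).
    pose proof (Rabs_pos (u - x)); nra. }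
  exists d, (Rabs L2 * Rabs L1); split; auto.
  intros u v hu hv hux hvx.
  apply Rle_trans with (L2 * Rabs (h u - h v)).
  - apply lip2; auto.
  - rewrite Rmult_assoc.
    apply Rle_trans with (Rabs L2 * Rabs (h u - h v));
      [apply Rmult_le_compat_r; [apply Rabs_pos | apply Rle_abs]|].
    apply Rmult_le_compat_l; [apply Rabs_pos | apply lip1'; auto].
Qed.

Lemma locally_lipschitz_on_subset (D E : R -> Prop) (h : R -> R) :
  (forall x, D x -> E x) -> locally_lipschitz_on E h -> locally_lipschitz_on D h.
Proof.
  intros hDE hh x hx.
  destruct (hh x (hDE x hx)) as [d [L [hd lip]]].
  exists d, L; split; auto.
Qed.

Lemma locally_lipschitz_on_ext (D : R -> Prop) (h k : R -> R) :
  (forall x, D x -> h x = k x) -> locally_lipschitz_on D k -> locally_lipschitz_on D h.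
Proof.
  intros hhk hk x hx.
  destruct (hk x hx) as [d [L [hd lip]]].
  exists d, L; split; auto.
  intros u v hu hv; rewrite !hhk by auto; auto.
Qed.

Lemma locally_lipschitz_continuity_pt (D : R -> Prop) (h : R -> R) (x : R) :
  locally_lipschitz_on D h -> D x ->
  (exists e, 0 < e /\ forall y, Rabs (y - x) < e -> D y) ->
  continuity_pt h x.
Proof.
  intros hh hx [e [he ball]].
  destruct (hh x hx) as [d [L [hd lip]]].
  intros eps heps.
  pose proof (Rabs_pos L).
  assert (heps' : 0 < eps / (Rabs L + 1)) by (apply Rdiv_lt_0_compat; lra).
  exists (Rmin (Rmin d e) (eps / (Rabs L + 1))); split.
  { apply Rmin_glb_lt; [apply Rmin_glb_lt|]; auto. }
  intros y [_ hy]; simpl in *; unfold R_dist in *.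
  pose proof (Rmin_l (Rmin d e) (eps / (Rabs L + 1))).
  pose proof (Rmin_r (Rmin d e) (eps / (Rabs L + 1))).
  pose proof (Rmin_l d e); pose proof (Rmin_r d e).
  assert (hyx : Rabs (h y - h x) <= L * Rabs (y - x)).
  { apply lip; auto; [apply ball; lra | lra | rewrite Rminus_diag, Rabs_R0; lra]. }
  pose proof (Rle_abs L); pose proof (Rabs_pos (y - x)).
  assert (eps / (Rabs L + 1) * (Rabs L + 1) = eps) by (field; lra).
  nra.
Qed.

Lemma lipschitz_of_derivative_bound (h h' : R -> R) (a b K : R) :
  (forall x, a <= x <= b -> derivable_pt_lim h x (h' x)) ->
  (forall x, a <= x <= b -> Rabs (h' x) <= K) ->
  forall u v, a <= u <= b -> a <= v <= b -> Rabs (h u - h v) <= K * Rabs (u - v).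
Proof.
  intros hd hK u v hu hv.
  assert (inside : forall c, Rmin v u <= c <= Rmax v u -> a <= c <= b).
  { intros c hc.
    pose proof (Rmin_glb v u a ltac:(lra) ltac:(lra)).
    pose proof (Rmax_lub v u b ltac:(lra) ltac:(lra)); lra. }
  destruct (MVT_abs h h' v u) as [c [e hc]]; [intros c hc; apply hd, inside; auto|].
  rewrite e; apply Rmult_le_compat_r; [apply Rabs_pos | apply hK, inside; auto].
Qed.

Lemma locally_lipschitz_pos_of_derivative (h h' : R -> R) :
  (forall x, 0 < x -> derivable_pt_lim h x (h' x)) ->
  (forall a b, 0 < a -> exists K, forall x, a <= x <= b -> Rabs (h' x) <= K) ->
  locally_lipschitz_on (fun x => 0 < x) h.
Proof.
  intros hd hb x hx.
  destruct (hb (x / 2) (3 * x / 2) ltac:(lra)) as [K hK].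
  exists (x / 2), K; split; [lra|].
  intros u v _ _ hux hvx.
  apply Rabs_def2 in hux; apply Rabs_def2 in hvx.
  apply (lipschitz_of_derivative_bound h h' (x / 2) (3 * x / 2)); auto; try lra.
  intros y hy; apply hd; lra.
Qed.

Lemma ln_locally_lipschitz : locally_lipschitz_on (fun x => 0 < x) ln.
Proof.
  apply (locally_lipschitz_pos_of_derivative ln Rinv); [apply derivable_pt_lim_ln|].
  intros a b ha; exists (/ a); intros x hx.
  rewrite Rabs_pos_eq by (left; apply Rinv_0_lt_compat; lra).
  apply Rinv_le_contravar; lra.
Qed.

Lemma Rpower_locally_lipschitz (e : R) :
  locally_lipschitz_on (fun x => 0 < x) (fun x => Rpower x e).
Proof.
  apply (locally_lipschitz_pos_of_derivative _ (fun x => e * Rpower x (e - 1))).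
  { intros x hx; apply derivable_pt_lim_power; auto. }
  intros a b ha; exists (Rabs e * (Rpower a (e - 1) + Rpower b (e - 1))); intros x hx.
  rewrite Rabs_mult, (Rabs_pos_eq (Rpower _ _)) by (left; apply exp_pos).
  apply Rmult_le_compat_l; [apply Rabs_pos | apply Rpower_le_endpoints; lra].
Qed.

Lemma Ropp_locally_lipschitz (D : R -> Prop) : locally_lipschitz_on D Ropp.
Proof.
  intros x _; exists 1, 1; split; [lra|].
  intros u v _ _ _ _; rewrite Rmult_1_l, <- Rabs_Ropp; right; f_equal; ring.
Qed.

(* [pmap p] is the change of variable t |-> t^p (log t for p = 0) with
   [I_p = pmap p (I)] and [f_{p,q}(u) = -f(pmap_inv p u)^q] for q < 0. *)
Definition pmap (p x : R) : R := if Req_EM_T p 0 then ln x else Rpower x p.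

Definition pmap_inv (p u : R) : R := if Req_EM_T p 0 then exp u else Rpower u (1 / p).

Definition pmap_dom (p u : R) : Prop := p = 0 \/ 0 < u.

Lemma pmap_inv_pmap p x : 0 < x -> pmap_inv p (pmap p x) = x.
Proof.
  intros hx; unfold pmap_inv, pmap; destruct Req_EM_T; [apply exp_ln; auto|].
  rewrite Rpower_mult; replace (p * (1 / p)) with 1 by (field; auto); apply Rpower_1; auto.
Qed.

Lemma pmap_pmap_inv p u : pmap_dom p u -> pmap p (pmap_inv p u) = u.
Proof.
  intros [hp|hu]; unfold pmap_inv, pmap; destruct Req_EM_T; try contradiction;
    [apply ln_exp | apply ln_exp|].
  rewrite Rpower_mult; replace (1 / p * p) with 1 by (field; auto); apply Rpower_1; auto.
Qed.

Lemma pmap_dom_pmap p x : pmap_dom p (pmap p x).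
Proof. unfold pmap_dom, pmap; destruct Req_EM_T; [left | right; apply exp_pos]; auto. Qed.

Lemma pmap_dom_convex_comb p u v t :
  pmap_dom p u -> pmap_dom p v -> 0 <= t <= 1 -> pmap_dom p (t * u + (1 - t) * v).
Proof. intros [|hu] [|hv] ht; try (left; assumption); right; nra. Qed.

Lemma Rpower_monotone_on (e : R) : monotone_on (fun x => 0 < x) (fun x => Rpower x e).
Proof.
  destruct (Rle_dec 0 e); [left | right]; intros a b ha hb hab.
  - apply Rle_Rpower_l; auto.
  - apply Rpower_le_antimono; lra.
Qed.

Lemma pmap_inv_monotone p : monotone_on (pmap_dom p) (pmap_inv p).
Proof.
  unfold pmap_inv; destruct Req_EM_T.
  - left; intros; apply exp_le; auto.
  - destruct (Rpower_monotone_on (1 / p)) as [h|h]; [left|right];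
      intros a b [|ha] [|hb] hab; try contradiction; apply h; auto.
Qed.

Lemma pmap_strict_between p a t b :
  0 < a -> a < t < b ->
  pmap p a < pmap p t < pmap p b \/ pmap p b < pmap p t < pmap p a.
Proof.
  intros ha [hat htb].
  pose proof (ln_increasing a t ha hat); pose proof (ln_increasing t b ltac:(lra) htb).
  unfold pmap; destruct Req_EM_T; [left; lra|].
  unfold Rpower; destruct (Rlt_dec 0 p); [left | right; assert (p < 0) by lra];
    split; apply exp_increasing; nra.
Qed.

Lemma pmap_locally_lipschitz p : locally_lipschitz_on (fun x => 0 < x) (pmap p).
Proof.
  unfold pmap; destruct Req_EM_T; [apply ln_locally_lipschitz | apply Rpower_locally_lipschitz].
Qed.

Lemma H_pmap p x y : 0 < x -> 0 < y -> H p x y = pmap_inv p ((pmap p x + pmap p y) / 2).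
Proof.
  intros hx hy; unfold H, pmap_inv, pmap; destruct Req_EM_T; auto.
  assert (x * y = exp ((ln x + ln y) / 2) * exp ((ln x + ln y) / 2)) as ->.
  { rewrite <- exp_plus, <- ln_mult by auto.
    replace ((ln (x * y)) / 2 + ln (x * y) / 2) with (ln (x * y)) by field.
    rewrite exp_ln; nra. }
  apply sqrt_square; left; apply exp_pos.
Qed.

Lemma fpq_neg_exponent p q f u : q < 0 -> fpq p q f u = - Rpower (f (pmap_inv p u)) q.
Proof.
  intros hq; unfold fpq, pmap_inv, sgn.
  destruct (Req_EM_T q 0); [lra|]; destruct (Rlt_dec 0 q); [lra|].
  destruct (Rlt_dec q 0); [|lra]; destruct (Req_EM_T p 0); ring.
Qed.

Section JensenConvex.

Variables (I : R -> Prop) (p q : R) (f : R -> R).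
Hypotheses (hI : is_open_interval I) (hIpos : forall x, I x -> 0 < x)
  (hq : q < 0) (hfpos : forall x, I x -> 0 < f x)
  (hconv : forall x y, I x -> I y -> f (H p x y) <= H q (f x) (f y)).

Lemma Ip_pmap x : I x -> Ip p I (pmap p x).
Proof. exists x; auto. Qed.

Lemma Ip_pmap_inv u :
  Ip p I u -> pmap_dom p u /\ I (pmap_inv p u) /\ pmap p (pmap_inv p u) = u.
Proof.
  intros [x [hx ->]]; fold (pmap p x).
  rewrite pmap_inv_pmap by auto; auto using pmap_dom_pmap.
Qed.

Lemma Ip_convex : convex_set (Ip p I).
Proof.
  intros u v t hu hv ht.
  destruct (Ip_pmap_inv u hu) as [du [Iu _]], (Ip_pmap_inv v hv) as [dv [Iv _]].
  pose proof (pmap_dom_convex_comb p u v t du dv ht) as dw.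
  rewrite <- (pmap_pmap_inv p _ dw); apply Ip_pmap.
  apply (open_interval_between I (pmap_inv p u) (pmap_inv p v)); auto.
  apply (between_monotone (pmap_dom p)); auto using pmap_inv_monotone, between_convex_comb.
Qed.

Lemma Ip_neighbours u : Ip p I u -> exists a b, Ip p I a /\ Ip p I b /\ a < u < b.
Proof.
  intros [x [hx ->]].
  destruct (open_interval_neighbours I x hI hx) as [a [b [ha [hb hab]]]].
  destruct (pmap_strict_between p a x b (hIpos a ha) hab) as [h|h];
    [exists (pmap p a), (pmap p b) | exists (pmap p b), (pmap p a)];
    repeat split; auto using Ip_pmap; apply h.
Qed.

Lemma fpq_neg u : fpq p q f u < 0.
Proof.
  rewrite fpq_neg_exponent by auto.
  pose proof (exp_pos (q * ln (f (pmap_inv p u)))); unfold Rpower; lra.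
Qed.

Lemma fpq_midpoint_convex u v :
  Ip p I u -> Ip p I v -> fpq p q f ((u + v) / 2) <= (fpq p q f u + fpq p q f v) / 2.
Proof.
  intros hu hv.
  destruct (Ip_pmap_inv u hu) as [_ [Iu eu]], (Ip_pmap_inv v hv) as [_ [Iv ev]].
  assert (hm : Ip p I ((u + v) / 2)).
  { replace ((u + v) / 2) with (1 / 2 * u + (1 - 1 / 2) * v) by field.
    apply Ip_convex; auto; lra. }
  destruct (Ip_pmap_inv _ hm) as [_ [Im _]].
  pose proof (hconv _ _ Iu Iv) as hc.
  rewrite H_pmap, eu, ev in hc by auto.
  rewrite !fpq_neg_exponent by auto.
  unfold H in hc; destruct (Req_EM_T q 0); [lra|].
  set (S := (Rpower (f (pmap_inv p u)) q + Rpower (f (pmap_inv p v)) q) / 2) in *.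
  assert (hS : 0 < S).
  { unfold S; pose proof (exp_pos (q * ln (f (pmap_inv p u))));
      pose proof (exp_pos (q * ln (f (pmap_inv p v)))); unfold Rpower; lra. }
  (* raising [f m <= S^(1/q)] to the negative power q reverses it *)
  pose proof (Rpower_le_antimono _ _ q ltac:(lra) (conj (hfpos _ Im) hc)) as hpow.
  rewrite Rpower_mult in hpow; replace (1 / q * q) with 1 in hpow by (field; lra).
  rewrite Rpower_1 in hpow by auto; unfold S in hpow; lra.
Qed.

Lemma fpq_convex : convex_on (Ip p I) (fpq p q f).
Proof.
  apply (convex_on_midpoint_bounded _ _ 0 Ip_convex fpq_midpoint_convex).
  intros u _; left; apply fpq_neg.
Qed.

Lemma f_eq_fpq x : I x -> f x = Rpower (- fpq p q f (pmap p x)) (1 / q).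
Proof.
  intros hx; rewrite fpq_neg_exponent, pmap_inv_pmap, Ropp_involutive, Rpower_mult by auto.
  replace (q * (1 / q)) with 1 by (field; lra); rewrite Rpower_1; auto.
Qed.

Lemma f_locally_lipschitz : locally_lipschitz_on I f.
Proof.
  apply (locally_lipschitz_on_ext _ _ _ f_eq_fpq).
  apply (locally_lipschitz_on_comp I (Ip p I) (pmap p)
    (fun u => Rpower (- fpq p q f u) (1 / q))); [exact Ip_pmap | |].
  - exact (locally_lipschitz_on_subset _ _ _ hIpos (pmap_locally_lipschitz p)).
  - apply (locally_lipschitz_on_comp (Ip p I) (fun y => y < 0) (fpq p q f)
      (fun y => Rpower (- y) (1 / q))); [intros; apply fpq_neg | |].
    + exact (convex_on_locally_lipschitz _ _ Ip_neighbours fpq_convex).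
    + apply (locally_lipschitz_on_comp _ (fun x => 0 < x) Ropp (fun x => Rpower x (1 / q)));
        [intros; lra | |].
      * apply Ropp_locally_lipschitz.
      * apply Rpower_locally_lipschitz.
Qed.

End JensenConvex.

Theorem corollary2 (I : R -> Prop) (p q : R) (f : R -> R)
  (hI : is_open_interval I) (hIpos : forall x, I x -> 0 < x)
  (hq : q < 0) (hfpos : forall x, I x -> 0 < f x)
  (hconv : forall x y, I x -> I y -> f (H p x y) <= H q (f x) (f y)) :
  convex_on (Ip p I) (fpq p q f) /\
  (forall x, I x -> continuity_pt f x) /\
  locally_lipschitz_on I f.
Proof.
  pose proof (f_locally_lipschitz I p q f hI hIpos hq hfpos hconv) as hlip.
  split; [exact (fpq_convex I p q f hI hIpos hq hfpos hconv)|].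
  split; [|exact hlip].
  intros x hx.
  exact (locally_lipschitz_continuity_pt I f x hlip hx (open_interval_ball I x hI hx)).
Qed.
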